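(* Let $n$ be a positive integer and let $A(n)=(a_{ij})$, $p=p(n)$, $pp=pp(n)$, $b(n)$, $l_{max}$ be as in the context. Let $m\ge 1$ be an integer such that $\overline{p}=pm$ satisfies $\lfloor \overline{p}/2\rfloor> b(n)$ and $\overline{p}\ge 2\,l_{max}$, put $r=\lfloor\overline{p}/2\rfloor$, let $v$ be an integer with $v\ge pp+\overline{p}$, and let $B=(b_{ij})_{1\le i,j\le\overline{p}}$ be the $\overline{p}\times\overline{p}$ matrix with $b_{ij}=a_{v+i,v+j}$ if $i-r\le j\le i+r$; $b_{ij}=a_{v+i,v+j-\overline{p}}$ if $j>i+r$; $b_{ij}=a_{v+i,v+j+\overline{p}}$ if $j<i-r$. Consider the incidence structure whose points are the columns of $B$ and whose lines are the rows of $B$, where column $i$ is incident with row $j$ iff $b_{ji}=1$. Then any two distinct lines are incident with at most one common point; equivalently, there are no indices $1\le i<j\le\overline{p}$, $1\le k<l\le\overline{p}$ with $b_{ik}=b_{il}=b_{jk}=b_{jl}=1$.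
   Context: $\mathbb{N}=\{1,2,3,\dots\}$. Fix a positive integer $n$. The infinite $\{0,1\}$-matrix $A(n)=(a_{ij})_{i,j\in\mathbb{N}}$ is defined recursively. Its entries are determined row by row (row $1$ first), and within each row from left to right, so that $a_{kl}$ is determined after all $a_{ij}$ with $i<k$ and all $a_{kj}$ with $j<l$. One sets $a_{kl}=1$ if and only if all of the following hold: (1) $\sum_{j<l}a_{kj}<n+1$; (2) $\sum_{i<k}a_{il}<n+1$; (3) there is no pair $(i,j)$ with $1\le i<k$, $1\le j<l$ and $a_{ij}=a_{il}=a_{kj}=1$. Otherwise $a_{kl}=0$. The matrix $A(n)$ is eventually periodic along the diagonal: there exist $c\ge0$, $q\ge1$ with $a_{i+q,j+q}=a_{ij}$ for all $i>c$, $j\ge1$. The period $p=p(n)$ is the smallest $q\ge1$ for which such a $c$ exists, and the preperiod $pp=pp(n)$ is the smallest $c\ge 0$ with $a_{i+p,j+p}=a_{ij}$ for all $i>c$, $j\ge 1$. Define $b(n)=\max\{|j-i| : i,j\ge1,\ a_{ij}=1,\ i>pp(n)\}$. The length of a row $k$ of $A(n)$ (which contains finitely many and at least one ones) is $l-f+1$, where $f$ and $l$ are the smallest and largest $j$ with $a_{kj}=1$; $l_{max}$ is the maximum length of a row $k$ of $A(n)$ with $k>pp(n)$. *)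

From mathcomp Require Import all_boot.
Set Implicit Arguments. Unset Strict Implicit. Unset Printing Implicit Defensive.

(* The matrix A(n), indices from 1 (entries with index 0 are [false]). *)

(* Value of a_{k l}, given the rows above ([P i j] for i < k) and the
   current row [cur j] for j < l.
   [count f (iota 1 l.-1)] is the sum of f j over 1 <= j < l. *)
Definition entry (n : nat) (P : nat -> nat -> bool) (k l : nat)
    (cur : nat -> bool) : bool :=
  [&& 0 < l,
      count cur (iota 1 l.-1) < n + 1,
      count (fun i => P i l) (iota 1 k.-1) < n + 1 &
      ~~ has (fun i => has (fun j => [&& P i j, P i l & cur j])
                           (iota 1 l.-1)) (iota 1 k.-1)].

(* [rowseq n P k l] = [:: a_{k0}; a_{k1}; ...; a_{kl}] with a_{k0} = false. *)
Fixpoint rowseq (n : nat) (P : nat -> nat -> bool) (k l : nat) : seq bool :=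
  match l with
  | 0 => [:: false]
  | l'.+1 => let s := rowseq n P k l' in
             rcons s (entry n P k l'.+1 (fun j => nth false s j))
  end.

(* [rows n k w] = rows 0..k of A(n), each truncated to columns 0..w
   (row 0 and column 0 are all false).  Since a_{kl} only depends on
   entries a_{ij} with j <= l, truncation is harmless. *)
Fixpoint rows (n k w : nat) : seq (seq bool) :=
  match k with
  | 0 => [:: nseq w.+1 false]
  | k'.+1 => let R := rows n k' w in
             rcons R (rowseq n (fun i j => nth false (nth [::] R i) j) k'.+1 w)
  end.

Definition A (n i j : nat) : bool := nth false (nth [::] (rows n i j) i) j.

Definition periodic_from (n q c : nat) : Prop :=
  forall i j, c < i -> 0 < j -> A n (i + q) (j + q) = A n i j.

Definition is_period (n p : nat) : Prop :=
  0 < p /\ (exists c, periodic_from n p c) /\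
  forall q, 0 < q -> (exists c, periodic_from n q c) -> p <= q.

Definition is_preperiod (n p pp : nat) : Prop :=
  periodic_from n p pp /\ forall c, periodic_from n p c -> pp <= c.

Definition dist (i j : nat) : nat := maxn (i - j) (j - i).

Definition is_b (n pp b : nat) : Prop :=
  (exists i j, [/\ pp < i, 0 < j, A n i j & dist i j = b]) /\
  forall i j, pp < i -> 0 < j -> A n i j -> dist i j <= b.

Definition row_length (n k len : nat) : Prop :=
  exists f l, [/\ 0 < f, A n k f, A n k l,
    (forall j, 0 < j -> A n k j -> f <= j <= l) & len = l - f + 1].

Definition is_lmax (n pp lmax : nat) : Prop :=
  (exists k, pp < k /\ row_length n k lmax) /\
  forall k len, pp < k -> row_length n k len -> len <= lmax.

Definition Bmat (n pbar v i j : nat) : bool :=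
  let r := pbar./2 in
  if i + r < j then A n (v + i) (v + j - pbar)
  else if j + r < i then A n (v + i) (v + j + pbar)
  else A n (v + i) (v + j).

From mathcomp Require Import all_boot zify.

(* The entries of B are entries of A(n) whose column indices, read modulo p*m,
   are those of B.  Two ones in a row of A(n) beyond the preperiod lie less than
   lmax <= p*m/2 apart, so the column offsets of the four ones of a rectangle in
   B agree in both rows; shifting one row of A(n) by a multiple of the period
   (which preserves A(n)) then produces a rectangle in A(n) itself, which the
   defining rule (3) forbids. *)

Section MatrixA.
Variable n : nat.

Lemma size_rowseq P k l : size (rowseq n P k l) = l.+1.
Proof. by elim: l => //= l IH; rewrite size_rcons IH. Qed.

Lemma nth_rowseq P k l j : j <= l ->
  nth false (rowseq n P k l) j = nth false (rowseq n P k j) j.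
Proof.
elim: l => [|l IH]; first by rewrite leqn0 => /eqP ->.
rewrite leq_eqVlt => /orP [/eqP -> // | hj] /=.
by rewrite nth_rcons size_rowseq hj; apply: IH.
Qed.

Lemma nth_rowseq_last P k l : 0 < l ->
  nth false (rowseq n P k l) l = entry n P k l (nth false (rowseq n P k l.-1)).
Proof. by case: l => // l _ /=; rewrite nth_rcons size_rowseq ltnn eqxx. Qed.

Lemma eq_entry P Q k l c d :
  (forall i j, 0 < i < k -> 0 < j <= l -> P i j = Q i j) ->
  (forall j, 0 < j < l -> c j = d j) ->
  entry n P k l c = entry n Q k l d.
Proof.
move=> eqPQ eqcd; rewrite /entry; case: (posnP l) => [->//|l_gt0].
congr [&& _, _, _ & _].
- congr (_ < _); apply: eq_in_count => j; rewrite mem_iota => hj; apply: eqcd; lia.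
- congr (_ < _); apply: eq_in_count => i; rewrite mem_iota => hi; apply: eqPQ; lia.
- congr negb; apply: eq_in_has => i; rewrite mem_iota => hi.
  apply: eq_in_has => j; rewrite mem_iota => hj.
  rewrite (eqPQ i j) ?(eqPQ i l) ?(eqcd j) //; lia.
Qed.

Lemma eq_rowseq P Q k l :
  (forall i j, 0 < i < k -> 0 < j <= l -> P i j = Q i j) ->
  rowseq n P k l = rowseq n Q k l.
Proof.
elim: l => [//|l IH] eqPQ /=.
rewrite IH => [|i j hi hj]; last by apply: eqPQ; lia.
by congr rcons; apply: eq_entry => // i j hi hj; apply: eqPQ; lia.
Qed.

Lemma size_rows k w : size (rows n k w) = k.+1.
Proof. by elim: k => //= k IH; rewrite size_rcons IH. Qed.

Lemma nth_rows k w i : i <= k -> nth [::] (rows n k w) i = nth [::] (rows n i w) i.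
Proof.
elim: k => [|k IH]; first by rewrite leqn0 => /eqP ->.
rewrite leq_eqVlt => /orP [/eqP -> // | hi] /=.
by rewrite nth_rcons size_rows hi; apply: IH.
Qed.

Lemma nth_rows_last k w : nth [::] (rows n k.+1 w) k.+1 =
  rowseq n (fun i j => nth false (nth [::] (rows n k w) i) j) k.+1 w.
Proof. by rewrite /= nth_rcons size_rows ltnn eqxx. Qed.

Lemma nth_rows_diag i w j : j <= w -> nth false (nth [::] (rows n i w) i) j = A n i j.
Proof.
elim/ltn_ind: i w j => [[|i]] IH w j hj.
  rewrite /A /= -[false :: nseq w false]/(nseq w.+1 false).
  by rewrite -[false :: nseq j false]/(nseq j.+1 false) !nth_nseq !if_same.
rewrite /A !nth_rows_last nth_rowseq //.
congr (nth false _ j); apply: eq_rowseq => i' j' hi' hj'.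
by rewrite !nth_rows ?IH //; lia.
Qed.

Lemma nth_rowsE k w i j : i <= k -> j <= w ->
  nth false (nth [::] (rows n k w) i) j = A n i j.
Proof. by move=> hi hj; rewrite nth_rows // nth_rows_diag. Qed.

Lemma A_entry k l : 0 < k -> 0 < l -> A n k l = entry n (A n) k l (A n k).
Proof.
case: k => // k _ l_gt0.
rewrite {1}/A nth_rows_last nth_rowseq_last //; apply: eq_entry => [i j hi hj|j hj].
  by rewrite nth_rowsE //; lia.
rewrite nth_rowseq; last lia.
rewrite /A nth_rows_last; congr (nth _ _ j); apply: eq_rowseq => i' j' hi' hj'.
by rewrite !nth_rowsE //; lia.
Qed.

Lemma A_rect_free_lt {i k j l} : 0 < i -> i < k -> 0 < j -> j < l ->
  A n i j -> A n i l -> A n k j -> A n k l = false.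
Proof.
move=> i_gt0 ltik j_gt0 ltjl Aij Ail Akj.
have rect : has (fun i' => has (fun j' => [&& A n i' j', A n i' l & A n k j'])
                  (iota 1 l.-1)) (iota 1 k.-1).
  apply/hasP; exists i; first by rewrite mem_iota; lia.
  by apply/hasP; exists j; [rewrite mem_iota; lia | rewrite Aij Ail Akj].
have [k_gt0 l_gt0] : 0 < k /\ 0 < l by lia.
by rewrite A_entry // /entry rect !andbF.
Qed.

Lemma A_rect_free {R1 R2 c1 c2} : 0 < R1 -> 0 < R2 -> 0 < c1 -> 0 < c2 ->
  R1 <> R2 -> c1 <> c2 -> A n R1 c1 -> A n R1 c2 -> A n R2 c1 -> A n R2 c2 -> False.
Proof.
move=> hR1 hR2 hc1 hc2 neR nec A11 A12 A21 A22.
have [ltR|ltR|//] := ltngtP R1 R2; have [ltc|ltc|//] := ltngtP c1 c2.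
- by have := A_rect_free_lt hR1 ltR hc1 ltc A11 A12 A21; rewrite A22.
- by have := A_rect_free_lt hR1 ltR hc2 ltc A12 A11 A22; rewrite A21.
- by have := A_rect_free_lt hR2 ltR hc1 ltc A21 A22 A11; rewrite A12.
- by have := A_rect_free_lt hR2 ltR hc2 ltc A22 A21 A12; rewrite A11.
Qed.

End MatrixA.

Lemma periodic_from_mull {n p c} t : periodic_from n p c -> periodic_from n (t * p) c.
Proof.
move=> hper; elim: t => [|t IH] i j hi hj; first by rewrite !addn0.
by rewrite mulSnr !addnA hper ?IH //; lia.
Qed.

Lemma row_ones_close {n pp b lmax R c c'} : is_b n pp b -> is_lmax n pp lmax ->
  pp < R -> 0 < c -> 0 < c' -> A n R c -> A n R c' -> c' < c + lmax.
Proof.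
move=> [_ hb] [_ hl] hR hc hc' ARc ARc'.
pose one x := (0 < x) && A n R x.
have bounded x : one x -> x <= R + b.
  by move=> /andP[x_gt0 ARx]; have := hb R x hR x_gt0 ARx; rewrite /dist; lia.
have ex_one : exists x, one x by exists c; rewrite /one hc ARc.
have [f /andP[f_gt0 ARf] f_min] := ex_minnP ex_one.
have [L /andP[_ ARL] L_max] := ex_maxnP ex_one bounded.
have len_row : row_length n R (L - f + 1).
  exists f, L; split => // j hj ARj.
  by rewrite f_min ?L_max // /one hj ARj.
have := hl R _ hR len_row.
have : f <= c by apply: f_min; rewrite /one hc ARc.
have : c' <= L by apply: L_max; rewrite /one hc' ARc'.
lia.
Qed.

Lemma Bmat_fold n P v i k : 0 < k <= P -> P <= v -> Bmat n P v i k ->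
  exists c e, [/\ 0 < c, c + P = v + k + e * P & A n (v + i) c].
Proof.
move=> hk hv; rewrite /Bmat; case: ifP => _ => [A_ik|].
  by exists (v + k - P), 0; split => //; lia.
case: ifP => _ A_ik; first by exists (v + k + P), 2; split => //; lia.
by exists (v + k), 1; split => //; lia.
Qed.

(* Ones at columns c = k and c' = l modulo P, less than L <= P/2 apart, have
   offsets with e - e' = 0 or 1 according as l - k < L or not. *)
Lemma fold_offset {P L k l c c' e e' : nat} : 2 * L <= P -> k < l < k + P ->
  c + P = k + e * P -> c' + P = l + e' * P -> c' < c + L -> c < c' + L ->
  e = e' + (L <= l - k).
Proof.
move=> hL hkl hc hc' hcc' hc'c.
have lo : e' <= e.
  rewrite leqNgt; apply/negP => hlt.
  have : e * P + P <= e' * P by rewrite -mulSnr leq_mul2r hlt orbT.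
  move: (e * P) (e' * P) hc hc' => E E'; lia.
have hi : e <= e'.+1.
  rewrite leqNgt; apply/negP => hlt.
  have : e' * P + P + P <= e * P by rewrite -!mulSnr leq_mul2r hlt orbT.
  move: (e * P) (e' * P) hc hc' => E E'; lia.
move: hc; have [->|->] : e = e' \/ e = e'.+1 by lia.
all: rewrite ?mulSnr; move: (e' * P) hc' => E hc' hc.
all: case: leqP; lia.
Qed.

Lemma neq_addn_muln {P i j x y : nat} : i < j < i + P -> i + x * P <> j + y * P.
Proof.
move=> hij; have [hxy|hyx|->] := ltngtP x y; last by lia.
- have : x * P + P <= y * P by rewrite -mulSnr leq_mul2r hxy orbT.
  lia.
- have : y * P + P <= x * P by rewrite -mulSnr leq_mul2r hyx orbT.
  lia.
Qed.

Theorem theorem4p4 (n p pp b lmax m v : nat) :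
  0 < n ->
  is_period n p -> is_preperiod n p pp ->
  is_b n pp b -> is_lmax n pp lmax ->
  0 < m ->
  b < (p * m)./2 ->
  2 * lmax <= p * m ->
  pp + p * m <= v ->
  ~ exists i j k l,
      [&& 1 <= i, i < j, j <= p * m, 1 <= k, k < l & l <= p * m] /\
      [&& Bmat n (p * m) v i k, Bmat n (p * m) v i l,
          Bmat n (p * m) v j k & Bmat n (p * m) v j l].
Proof.
move=> _ _ [hper _] hb hl _ _ hlP hv
  [i [j [k [l [/and5P[hi hij hjP hk /andP[hkl hlP']] /and4P[Bik Bil Bjk Bjl]]]]]].
set P := p * m in hlP hv hjP hlP' Bik Bil Bjk Bjl.
have hperP : periodic_from n P pp by rewrite /P mulnC; apply: periodic_from_mull.
have [c1 [e1 [c1_gt0 ec1 A1]]] := Bmat_fold n P v i k ltac:(lia) ltac:(lia) Bik.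
have [c2 [e2 [c2_gt0 ec2 A2]]] := Bmat_fold n P v i l ltac:(lia) ltac:(lia) Bil.
have [c3 [e3 [c3_gt0 ec3 A3]]] := Bmat_fold n P v j k ltac:(lia) ltac:(lia) Bjk.
have [c4 [e4 [c4_gt0 ec4 A4]]] := Bmat_fold n P v j l ltac:(lia) ltac:(lia) Bjl.
have close R c c' : v < R -> 0 < c -> 0 < c' -> A n R c -> A n R c' -> c' < c + lmax.
  by move=> hR; apply: (row_ones_close hb hl); lia.
have hkl' : v + k < v + l < v + k + P by lia.
have off_i := fold_offset hlP hkl' ec1 ec2
  (close (v + i) _ _ ltac:(lia) c1_gt0 c2_gt0 A1 A2)
  (close (v + i) _ _ ltac:(lia) c2_gt0 c1_gt0 A2 A1).
have off_j := fold_offset hlP hkl' ec3 ec4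
  (close (v + j) _ _ ltac:(lia) c3_gt0 c4_gt0 A3 A4)
  (close (v + j) _ _ ltac:(lia) c4_gt0 c3_gt0 A4 A3).
have col1 : c3 + e1 * P = c1 + e3 * P by lia.
have col2 : c4 + e1 * P = c2 + e3 * P by move: ec2 ec4; rewrite off_i off_j !mulnDl; lia.
have shift e R c : pp < R -> 0 < c -> A n (R + e * P) (c + e * P) = A n R c.
  by move=> hR hc; apply: (periodic_from_mull e hperP).
have rows_neq : v + i + e3 * P <> v + j + e1 * P by apply: neq_addn_muln; lia.
have cols_neq : c1 + e3 * P <> c2 + e3 * P.
  by move=> /addIn c12; apply: (neq_addn_muln (x := e1) (y := e2) hkl'); lia.
apply: (A_rect_free n _ _ _ _ rows_neq cols_neq); [lia..| | | |].
- by rewrite shift //; lia.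
- by rewrite shift //; lia.
- by rewrite -col1 shift //; lia.
- by rewrite -col2 shift //; lia.
Qed.
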